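(* Let $(E,P,\vartheta)$ be a complete bipolar metric space and let $F\colon E\cup P\to E\cup P$ satisfy $F(E)\subseteq E$, $F(P)\subseteq P$. Suppose there exist $\pi\in(0,1)$, an integer $\sigma\geq 1$ and constants $q_1,\dots,q_\sigma\in(0,\infty)$ such that $$\sum_{\upsilon=1}^{\sigma} q_\upsilon\,\vartheta^\upsilon(Fe,Ff)\leq\pi\sum_{\upsilon=1}^{\sigma}q_\upsilon\,\vartheta^\upsilon(e,f)\quad\text{for all } e\in E,\ f\in P.$$ Then $F$ has a unique fixed point.
   Context: A bipolar metric space is a triple $(E,P,\vartheta)$ where $E,P$ are nonempty sets and $\vartheta\colon E\times P\to[0,\infty)$ satisfies: (1) for $e\in E$, $f\in P$, $\vartheta(e,f)=0$ iff $e=f$; (2) $\vartheta(e,f)=\vartheta(f,e)$ whenever $e,f\in E\cap P$; (3) $\vartheta(e,f)\leq\vartheta(e,z)+\vartheta(r,z)+\vartheta(r,f)$ for all $e,r\in E$, $z,f\in P$. A sequence $(x_n)$ in $E$ converges to $y\in P$ if $\vartheta(x_n,y)\to0$; a sequence $(y_n)$ in $P$ converges to $x\in E$ if $\vartheta(x,y_n)\to0$. A bisequence $(x_n,y_n)$ with $x_n\in E$, $y_n\in P$ is Cauchy if for every $\varepsilon>0$ there is $N$ with $\vartheta(x_n,y_m)<\varepsilon$ for all $n,m\geq N$; the space is complete if every Cauchy bisequence is convergent. $\vartheta^\upsilon$ denotes the $\upsilon$-th power of $\vartheta$. A fixed point of $F$ is a point $g$ with $Fg=g$. *)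

From Stdlib Require Import Reals.
Open Scope R_scope.

(* A bipolar metric space (E, P, d) is modelled inside an ambient type X:
   E and P are predicates (subsets) of X, so that E ∩ P and E ∪ P make sense,
   and d : X -> X -> R is only meaningful on E × P. *)
Definition bipolar_metric {X : Type} (E P : X -> Prop) (d : X -> X -> R) : Prop :=
  (exists e, E e) /\ (exists f, P f) /\
  (forall e f, E e -> P f -> 0 <= d e f) /\
  (forall e f, E e -> P f -> (d e f = 0 <-> e = f)) /\
  (forall e f, E e -> P e -> E f -> P f -> d e f = d f e) /\
  (forall e r z f, E e -> E r -> P z -> P f ->
     d e f <= d e z + d r z + d r f).

Definition bp_conv_left {X : Type} (d : X -> X -> R) (x : nat -> X) (y : X) : Prop :=
  forall eps, 0 < eps -> exists N, forall n, (N <= n)%nat -> d (x n) y < eps.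

Definition bp_conv_right {X : Type} (d : X -> X -> R) (y : nat -> X) (x : X) : Prop :=
  forall eps, 0 < eps -> exists N, forall n, (N <= n)%nat -> d x (y n) < eps.

Definition bp_cauchy {X : Type} (d : X -> X -> R) (x y : nat -> X) : Prop :=
  forall eps, 0 < eps -> exists N, forall n m, (N <= n)%nat -> (N <= m)%nat ->
    d (x n) (y m) < eps.

Definition bp_convergent {X : Type} (E P : X -> Prop) (d : X -> X -> R)
  (x y : nat -> X) : Prop :=
  (exists b, P b /\ bp_conv_left d x b) /\ (exists a, E a /\ bp_conv_right d y a).

Definition bp_complete {X : Type} (E P : X -> Prop) (d : X -> X -> R) : Prop :=
  forall x y : nat -> X, (forall n, E (x n)) -> (forall n, P (y n)) ->
    bp_cauchy d x y -> bp_convergent E P d x y.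

Definition weighted_pow_sum (q : nat -> R) (sigma : nat) (t : R) : R :=
  sum_f_R0 (fun i => q (S i) * t ^ (S i)) (pred sigma).

(* Put W(t) = sum_{v=1}^{sigma} q_v t^v. Then q_1 t <= W(t) for t >= 0 and
   W(t) <= W(1) t for t in [0, 1], so iterating the contraction gives
   d(F^n e, F^n f) <= pi^n W(d(e, f)) / q_1, while near the diagonal F is
   Lipschitz with constant pi W(1) / q_1. The first bound makes the orbit
   bisequence (F^n e0, F^n f0) Cauchy, by a geometric series in the bipolar
   triangle inequality; its limit a lies in E ∩ P, and the second bound makes
   F continuous at a, so that F a = a. For fixed points x in E and y in P the
   first bound reads d(x, y) <= pi^n W(d(x, y)) / q_1 for every n, whence
   x = y. *)

From Stdlib Require Import Reals Lra Lia.
Open Scope R_scope.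

Lemma geometric_eventually_lt (r C eps : R) :
  0 <= r < 1 -> 0 < eps -> exists N, forall n, (N <= n)%nat -> r ^ n * C < eps.
Proof.
  intros Hr Heps.
  destruct (pow_lt_1_zero r ltac:(rewrite Rabs_pos_eq; lra) (eps / (Rabs C + 1)))
    as [N HN].
  { apply Rdiv_lt_0_compat; [lra | pose proof (Rabs_pos C); lra]. }
  exists N; intros n Hn.
  specialize (HN n Hn); rewrite Rabs_pos_eq in HN by (apply pow_le; lra).
  pose proof (pow_le r n ltac:(lra)) as Hrn.
  pose proof (Rle_abs C); pose proof (Rabs_pos C).
  assert (Hlt : r ^ n * (Rabs C + 1) < eps).
  { apply Rmult_lt_reg_r with (/ (Rabs C + 1)); [apply Rinv_0_lt_compat; lra |].
    rewrite Rmult_assoc, Rinv_r by lra; lra. }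
  nra.
Qed.

Lemma Rle_0_eq_of_le_eps (x : R) :
  0 <= x -> (forall eps, 0 < eps -> x <= eps) -> x = 0.
Proof.
  intros Hx Hsmall.
  apply Rle_antisym; [| exact Hx].
  apply Rle_plus_epsilon; intros eps Heps; rewrite Rplus_0_l; auto.
Qed.

Section WeightedPowSum.

Variables (q : nat -> R) (sigma : nat).
Hypothesis sigma_ge1 : (1 <= sigma)%nat.
Hypothesis q_ge0 : forall v, (1 <= v <= sigma)%nat -> 0 <= q v.

Lemma weighted_pow_sum_ge_lin (t : R) :
  0 <= t -> q 1%nat * t <= weighted_pow_sum q sigma t.
Proof.
  intro Ht; unfold weighted_pow_sum.
  assert (Hterm : forall i, (i <= pred sigma)%nat -> 0 <= q (S i) * t ^ S i).
  { intros i Hi; apply Rmult_le_pos; [apply q_ge0; lia | apply pow_le; exact Ht]. }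
  induction (pred sigma) as [| n IH]; simpl.
  - lra.
  - pose proof (Hterm (S n) (le_n _)).
    assert (q 1%nat * t <= sum_f_R0 (fun i => q (S i) * t ^ S i) n).
    { apply IH; intros i Hi; apply Hterm; lia. }
    simpl in *; lra.
Qed.

Lemma weighted_pow_sum_ge0 (t : R) : 0 <= t -> 0 <= weighted_pow_sum q sigma t.
Proof.
  intro Ht; eapply Rle_trans; [| apply weighted_pow_sum_ge_lin, Ht].
  apply Rmult_le_pos; [apply q_ge0; lia | exact Ht].
Qed.

Lemma weighted_pow_sum_le_lin (t : R) :
  0 <= t <= 1 -> weighted_pow_sum q sigma t <= weighted_pow_sum q sigma 1 * t.
Proof.
  intro Ht; unfold weighted_pow_sum.
  rewrite Rmult_comm, scal_sum.
  apply sum_Rle; intros i Hi.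
  rewrite pow1, Rmult_1_r.
  assert (Hpow : t ^ S i <= t).
  { simpl; pose proof (pow_incr t 1 i ltac:(lra)); rewrite pow1 in *.
    pose proof (pow_le t i ltac:(lra)); nra. }
  pose proof (q_ge0 (S i) ltac:(lia)); nra.
Qed.

End WeightedPowSum.

Section BipolarSpace.

Variables (X : Type) (E P : X -> Prop) (d : X -> X -> R).
Hypothesis d_ge0 : forall e f, E e -> P f -> 0 <= d e f.
Hypothesis d_eq0 : forall e f, E e -> P f -> d e f = 0 -> e = f.
Hypothesis d_triangle : forall e r z f, E e -> E r -> P z -> P f ->
  d e f <= d e z + d r z + d r f.

Lemma bp_cauchy_shift_r (x y : nat -> X) :
  bp_cauchy d x y -> bp_cauchy d x (fun n => y (S n)).
Proof.
  intros Hc eps Heps; destruct (Hc eps Heps) as [N HN].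
  exists N; intros n m Hn Hm; apply HN; lia.
Qed.

Lemma bp_limits_eq (x y : nat -> X) (u v : X) :
  (forall n, E (x n)) -> (forall n, P (y n)) -> E u -> P v ->
  bp_conv_right d y u -> bp_cauchy d x y -> bp_conv_left d x v -> u = v.
Proof.
  intros Hx Hy Hu Hv Hyu Hxy Hxv.
  apply d_eq0; auto; apply Rle_0_eq_of_le_eps; auto.
  intros eps Heps.
  destruct (Hyu (eps / 3) ltac:(lra)) as [N1 H1].
  destruct (Hxy (eps / 3) ltac:(lra)) as [N2 H2].
  destruct (Hxv (eps / 3) ltac:(lra)) as [N3 H3].
  set (n := (N1 + N2 + N3)%nat).
  specialize (H1 n ltac:(lia)); specialize (H2 n n ltac:(lia) ltac:(lia));
    specialize (H3 n ltac:(lia)).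
  pose proof (d_triangle u (x n) (y n) v Hu (Hx n) (Hy n) Hv); lra.
Qed.

Section GeometricBisequence.

Variables (x y : nat -> X) (r K : R).
Hypotheses (Hx : forall n, E (x n)) (Hy : forall n, P (y n)).
Hypotheses (Hr : 0 <= r < 1) (HK : 0 <= K).
Hypothesis bound_diag : forall n, d (x n) (y n) <= r ^ n * K.
Hypothesis bound_below : forall n, d (x (S n)) (y n) <= r ^ n * K.
Hypothesis bound_above : forall n, d (x n) (y (S n)) <= r ^ n * K.

Let C := 2 * K / (1 - r).

Let C_fixed : 2 * K + r * C = C.
Proof. unfold C; field; lra. Qed.

Let C_ge : K <= C.
Proof.
  pose proof C_fixed.
  assert (0 <= C) by (unfold C, Rdiv; apply Rmult_le_pos;
    [lra | left; apply Rinv_0_lt_compat; lra]).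
  assert (0 <= r * C) by (apply Rmult_le_pos; lra).
  lra.
Qed.

Lemma bp_geometric_bound_above (k n : nat) : d (x n) (y (n + k)%nat) <= r ^ n * C.
Proof.
  pose proof C_fixed as HC; pose proof C_ge.
  revert n; induction k as [| k IH]; intro n; pose proof (pow_le r n ltac:(lra)).
  - rewrite Nat.add_0_r; eapply Rle_trans; [apply bound_diag | nra].
  - replace (n + S k)%nat with (S n + k)%nat by lia.
    eapply Rle_trans; [apply (d_triangle _ (x (S n)) (y n)); auto |].
    specialize (IH (S n)); pose proof (bound_diag n); pose proof (bound_below n).
    simpl in IH |- *; rewrite <- HC; nra.
Qed.

Lemma bp_geometric_bound_below (k n : nat) : d (x (n + k)%nat) (y n) <= r ^ n * C.
Proof.
  pose proof C_fixed as HC; pose proof C_ge.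
  revert n; induction k as [| k IH]; intro n; pose proof (pow_le r n ltac:(lra)).
  - rewrite Nat.add_0_r; eapply Rle_trans; [apply bound_diag | nra].
  - replace (n + S k)%nat with (S n + k)%nat by lia.
    eapply Rle_trans; [apply (d_triangle _ (x n) (y (S n))); auto |].
    specialize (IH (S n)); pose proof (bound_diag n); pose proof (bound_above n).
    simpl in IH |- *; rewrite <- HC; nra.
Qed.

Lemma bp_cauchy_of_geometric : bp_cauchy d x y.
Proof.
  intros eps Heps.
  destruct (geometric_eventually_lt r C eps Hr Heps) as [N HN].
  exists N; intros n m Hn Hm.
  destruct (Nat.le_ge_cases n m) as [Hnm | Hmn].
  - replace m with (n + (m - n))%nat by lia.
    eapply Rle_lt_trans; [apply bp_geometric_bound_above | apply HN; lia].
  - replace n with (m + (n - m))%nat by lia.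
    eapply Rle_lt_trans; [apply bp_geometric_bound_below | apply HN; lia].
Qed.

End GeometricBisequence.

Section Iteration.

Variable F : X -> X.
Hypotheses (HFE : forall e, E e -> E (F e)) (HFP : forall f, P f -> P (F f)).

Lemma iter_in_E (n : nat) (e : X) : E e -> E (Nat.iter n F e).
Proof. intro He; induction n; simpl; auto. Qed.

Lemma iter_in_P (n : nat) (f : X) : P f -> P (Nat.iter n F f).
Proof. intro Hf; induction n; simpl; auto. Qed.

Lemma bp_conv_right_map_of_lipschitz (c delta : R) (y : nat -> X) (a : X) :
  0 <= c -> 0 < delta ->
  (forall e f, E e -> P f -> d e f <= delta -> d (F e) (F f) <= c * d e f) ->
  E a -> (forall n, P (y n)) ->
  bp_conv_right d y a -> bp_conv_right d (fun n => F (y n)) (F a).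
Proof.
  intros Hc Hdelta HF Ha Hy Hya eps Heps.
  destruct (Hya (Rmin delta (eps / (c + 1))))
    as [N HN]; [apply Rmin_glb_lt; [lra | apply Rdiv_lt_0_compat; lra] |].
  exists N; intros n Hn; specialize (HN n Hn).
  pose proof (Rmin_l delta (eps / (c + 1))); pose proof (Rmin_r delta (eps / (c + 1))).
  pose proof (d_ge0 a (y n) Ha (Hy n)).
  assert (Hsmall : (c + 1) * d a (y n) < eps).
  { apply Rmult_lt_reg_r with (/ (c + 1)); [apply Rinv_0_lt_compat; lra |].
    replace ((c + 1) * d a (y n) * / (c + 1)) with (d a (y n)) by (field; lra).
    unfold Rdiv in *; lra. }
  pose proof (HF a (y n) Ha (Hy n) ltac:(lra)); nra.
Qed.

Variables (r : R) (K : X -> X -> R).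
Hypothesis Hr : 0 <= r < 1.
Hypothesis iter_bound : forall n e f, E e -> P f ->
  d (Nat.iter n F e) (Nat.iter n F f) <= r ^ n * K e f.

Lemma iter_bound_ge0 (e f : X) : E e -> P f -> 0 <= K e f.
Proof.
  intros He Hf; pose proof (iter_bound 0 e f He Hf); pose proof (d_ge0 e f He Hf).
  simpl in *; lra.
Qed.

Lemma bp_fixed_point_unique (e f : X) : E e -> P f -> F e = e -> F f = f -> e = f.
Proof.
  intros He Hf HFe HFf.
  assert (Hiter : forall n g, F g = g -> Nat.iter n F g = g).
  { intros n g Hg; induction n; simpl; congruence. }
  apply d_eq0; auto; apply Rle_0_eq_of_le_eps; auto.
  intros eps Heps.
  destruct (geometric_eventually_lt r (K e f) eps Hr Heps) as [N HN].
  pose proof (iter_bound N e f He Hf) as HB; rewrite !Hiter in HB by assumption.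
  specialize (HN N (le_n _)); lra.
Qed.

Theorem bp_fixed_point_of_iter_bound (c delta : R) (e0 f0 : X) :
  bp_complete E P d -> E e0 -> P f0 -> 0 <= c -> 0 < delta ->
  (forall e f, E e -> P f -> d e f <= delta -> d (F e) (F f) <= c * d e f) ->
  exists a, E a /\ P a /\ F a = a.
Proof.
  intros Hcomp He0 Hf0 Hc Hdelta Hlip.
  set (x := fun n => Nat.iter n F e0); set (y := fun n => Nat.iter n F f0).
  assert (Hx : forall n, E (x n)) by (intro; apply iter_in_E, He0).
  assert (Hy : forall n, P (y n)) by (intro; apply iter_in_P, Hf0).
  pose proof (iter_bound_ge0 e0 f0 He0 Hf0).
  pose proof (iter_bound_ge0 (F e0) f0 (HFE e0 He0) Hf0).
  pose proof (iter_bound_ge0 e0 (F f0) He0 (HFP f0 Hf0)).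
  set (K0 := K e0 f0 + K (F e0) f0 + K e0 (F f0)).
  assert (Hxy : bp_cauchy d x y).
  { assert (Hpow : forall n, 0 <= r ^ n) by (intro; apply pow_le; lra).
    apply bp_cauchy_of_geometric with r K0; auto; [unfold K0; lra | ..];
      intro n; unfold x, y; rewrite ?Nat.iter_succ_r;
      (eapply Rle_trans; [apply iter_bound; auto |]);
      apply Rmult_le_compat_l; auto; unfold K0; lra. }
  destruct (Hcomp x y Hx Hy Hxy) as [[b [Hb Hxb]] [a [Ha Hya]]].
  assert (Hab : a = b) by exact (bp_limits_eq x y a b Hx Hy Ha Hb Hya Hxy Hxb).
  subst b; exists a; split; [exact Ha | split; [exact Hb |]].
  apply (bp_limits_eq x (fun n => y (S n))); auto.
  - exact (bp_conv_right_map_of_lipschitz c delta y a Hc Hdelta Hlip Ha Hy Hya).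
  - exact (bp_cauchy_shift_r x y Hxy).
Qed.

End Iteration.

End BipolarSpace.

Section WeightedContraction.

Variables (X : Type) (E P : X -> Prop) (d : X -> X -> R) (F : X -> X).
Variables (pi : R) (q : nat -> R) (sigma : nat).
Hypothesis d_ge0 : forall e f, E e -> P f -> 0 <= d e f.
Hypotheses (HFE : forall e, E e -> E (F e)) (HFP : forall f, P f -> P (F f)).
Hypothesis pi_ge0 : 0 <= pi.
Hypothesis sigma_ge1 : (1 <= sigma)%nat.
Hypothesis q_gt0 : forall v, (1 <= v <= sigma)%nat -> 0 < q v.
Hypothesis contraction : forall e f, E e -> P f ->
  weighted_pow_sum q sigma (d (F e) (F f)) <= pi * weighted_pow_sum q sigma (d e f).

Let W := weighted_pow_sum q sigma.

Let q_ge0 : forall v, (1 <= v <= sigma)%nat -> 0 <= q v.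
Proof. intros v Hv; left; apply q_gt0, Hv. Qed.

Let q1_gt0 : 0 < q 1%nat.
Proof. apply q_gt0; lia. Qed.

Lemma dist_le_weighted_pow_sum (e f : X) : E e -> P f -> d e f <= W (d e f) / q 1%nat.
Proof.
  intros He Hf.
  apply Rmult_le_reg_l with (q 1%nat); [exact q1_gt0 |].
  replace (q 1%nat * (W (d e f) / q 1%nat)) with (W (d e f)) by (field; lra).
  apply weighted_pow_sum_ge_lin; auto.
Qed.

Lemma weighted_pow_sum_iter_contraction (n : nat) (e f : X) : E e -> P f ->
  W (d (Nat.iter n F e) (Nat.iter n F f)) <= pi ^ n * W (d e f).
Proof.
  intros He Hf; induction n as [| n IH]; simpl; [lra |].
  eapply Rle_trans; [apply contraction; [apply iter_in_E | apply iter_in_P]; auto |].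
  rewrite Rmult_assoc; apply Rmult_le_compat_l; assumption.
Qed.

Lemma dist_iter_le (n : nat) (e f : X) : E e -> P f ->
  d (Nat.iter n F e) (Nat.iter n F f) <= pi ^ n * (W (d e f) / q 1%nat).
Proof.
  intros He Hf.
  eapply Rle_trans; [apply dist_le_weighted_pow_sum; [apply iter_in_E | apply iter_in_P]; auto |].
  unfold Rdiv; rewrite <- Rmult_assoc.
  apply Rmult_le_compat_r; [left; apply Rinv_0_lt_compat, q1_gt0 |].
  apply weighted_pow_sum_iter_contraction; auto.
Qed.

Lemma dist_map_le_of_le1 (e f : X) : E e -> P f -> d e f <= 1 ->
  d (F e) (F f) <= pi * W 1 / q 1%nat * d e f.
Proof.
  intros He Hf Hle1.
  eapply Rle_trans; [apply dist_le_weighted_pow_sum; auto |].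
  replace (pi * W 1 / q 1%nat * d e f) with (pi * (W 1 * d e f) / q 1%nat) by (field; lra).
  unfold Rdiv; apply Rmult_le_compat_r; [left; apply Rinv_0_lt_compat, q1_gt0 |].
  eapply Rle_trans; [apply contraction; auto |].
  apply Rmult_le_compat_l; [exact pi_ge0 |].
  apply weighted_pow_sum_le_lin; auto.
Qed.

End WeightedContraction.

Theorem corollary3p6 (X : Type) (E P : X -> Prop) (d : X -> X -> R) (F : X -> X)
  (Hbp : bipolar_metric E P d) (Hcomp : bp_complete E P d)
  (HFE : forall e, E e -> E (F e)) (HFP : forall f, P f -> P (F f))
  (pi : R) (Hpi : 0 < pi < 1) (sigma : nat) (Hsigma : (1 <= sigma)%nat)
  (q : nat -> R) (Hq : forall v, (1 <= v <= sigma)%nat -> 0 < q v)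
  (Hcontr : forall e f, E e -> P f ->
     weighted_pow_sum q sigma (d (F e) (F f)) <= pi * weighted_pow_sum q sigma (d e f)) :
  exists g, (E g \/ P g) /\ F g = g /\
    forall h, (E h \/ P h) -> F h = h -> h = g.
Proof.
  destruct Hbp as [[e0 He0] [[f0 Hf0] [Hge0 [Heq0 [_ Htri]]]]].
  assert (Heq0' : forall e f, E e -> P f -> d e f = 0 -> e = f)
    by (intros e f He Hf; apply Heq0; assumption).
  assert (Hq1 : 0 < q 1%nat) by (apply Hq; lia).
  set (W := weighted_pow_sum q sigma).
  set (K := fun e f => W (d e f) / q 1%nat).
  set (c := pi * W 1 / q 1%nat).
  assert (Hiter : forall n e f, E e -> P f ->
    d (Nat.iter n F e) (Nat.iter n F f) <= pi ^ n * K e f)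
    by (intros; apply (dist_iter_le X E P d F pi q sigma); auto; lra).
  assert (Hlip : forall e f, E e -> P f -> d e f <= 1 -> d (F e) (F f) <= c * d e f)
    by (intros; apply (dist_map_le_of_le1 X E P d F pi q sigma); auto; lra).
  assert (Hc : 0 <= c).
  { assert (0 <= W 1)
      by (apply weighted_pow_sum_ge0; [exact Hsigma | intros v Hv; left; apply Hq, Hv | lra]).
    unfold c, Rdiv; apply Rmult_le_pos; [nra | left; apply Rinv_0_lt_compat, Hq1]. }
  destruct (bp_fixed_point_of_iter_bound X E P d Hge0 Heq0' Htri F HFE HFP pi K
              ltac:(lra) Hiter c 1 e0 f0 Hcomp He0 Hf0 Hc Rlt_0_1 Hlip)
    as [a [HaE [HaP Hfix]]].
  exists a; split; [left; exact HaE | split; [exact Hfix |]].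
  intros h [Hh | Hh] Hfh.
  - apply (bp_fixed_point_unique X E P d Hge0 Heq0' F pi K); auto; lra.
  - symmetry; apply (bp_fixed_point_unique X E P d Hge0 Heq0' F pi K); auto; lra.
Qed.
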